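(* Let $w:\mathbb{Z}\to\mathbb{R}$ be a weight with $w(n)\geq 1$ for all $n$ and $\sup_{n\in\mathbb{Z}}\big(|\tfrac{w(n+1)}{w(n)}|+|\tfrac{w(n)}{w(n+1)}|\big)<\infty$, and fix $1\leq p\leq\infty$. Suppose $(\alpha(n,t),\beta(n,t))$ and $(\tilde\alpha(n,t),\tilde\beta(n,t))$ are arbitrary bounded solutions, defined for $t\in(t_0-T,t_0+T)$, of the Ablowitz--Ladik system \[ -i\alpha_t-(1-\alpha\beta)(\alpha^-+\alpha^+)+2\alpha=0,\qquad -i\beta_t+(1-\alpha\beta)(\beta^-+\beta^+)-2\beta=0. \] If $\|(\alpha(t)-\tilde\alpha(t),\beta(t)-\tilde\beta(t))\|_{w,p}<\infty$ holds for $t=t_0$, then it holds for all $t\in(t_0-T,t_0+T)$.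
   Context: Here $\alpha,\beta,\tilde\alpha,\tilde\beta:\mathbb{Z}\times\mathbb{R}\to\mathbb{C}$ are bounded on $\mathbb{Z}\times(t_0-T,t_0+T)$ and $C^1$ in $t$ for each $n$, and $f^\pm(n,t)=f(n\pm1,t)$. $T>0$ is the length of the local existence interval of the solutions. For pairs of sequences $(\alpha,\beta)$, \[ \|(\alpha,\beta)\|_{w,p}=\Big(\sum_{n\in\mathbb{Z}} w(n)\big(|\alpha(n)|^p+|\beta(n)|^p\big)\Big)^{1/p}\ (1\leq p<\infty),\qquad \|(\alpha,\beta)\|_{w,\infty}=\sup_{n\in\mathbb{Z}} w(n)\big(|\alpha(n)|+|\beta(n)|\big). \] *)

From Stdlib Require Import Reals ZArith.
From Coquelicot Require Import Coquelicot.
Open Scope R_scope.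

Definition rpow (x q : R) : R := if Rle_dec x 0 then 0 else Rpower x q.

(* For finite p the sum over Z of a
   nonnegative family is finite iff both half-sums (n >= 0, n < 0) converge. *)
Definition wnorm_finite (w : Z -> R) (p : Rbar) (a b : Z -> C) : Prop :=
  match p with
  | Finite q =>
      let term := fun n : Z => w n * (rpow (Cmod (a n)) q + rpow (Cmod (b n)) q) in
      ex_series (fun k : nat => term (Z.of_nat k)) /\
      ex_series (fun k : nat => term (- Z.of_nat (S k))%Z)
  | p_infty => exists M : R, forall n : Z, w n * (Cmod (a n) + Cmod (b n)) <= M
  | m_infty => False
  end.

Definition in_tint (t0 T t : R) : Prop := t0 - T < t < t0 + T.

Definition bounded_on (t0 T : R) (a : Z -> R -> C) : Prop :=
  exists M : R, forall n t, in_tint t0 T t -> Cmod (a n t) <= M.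

Definition AL_solution (t0 T : R) (a b : Z -> R -> C) : Prop :=
  exists da db : Z -> R -> C,
    forall (n : Z) (t : R), in_tint t0 T t ->
      is_derive (a n) t (da n t) /\ is_derive (b n) t (db n t) /\
      continuous (da n) t /\ continuous (db n) t /\
      (- Ci * da n t - (1 - a n t * b n t) * (a (n - 1)%Z t + a (n + 1)%Z t)
         + 2 * a n t = 0)%C /\
      (- Ci * db n t + (1 - a n t * b n t) * (b (n - 1)%Z t + b (n + 1)%Z t)
         - 2 * b n t = 0)%C.

From Stdlib Require Import Reals ZArith Lra Lia.
From Coquelicot Require Import Coquelicot.
Open Scope R_scope.

(* Write [X_n(t) = |a_n - a'_n| + |b_n - b'_n|]. Subtracting the two systems, the
   right-hand sides are Lipschitz in the values at sites [n - 1], [n], [n + 1]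
   (the solutions are bounded), so by the mean value theorem the suprema [Y_n] of
   [X_n] over a short time window around [c] satisfy
   [Y_n <= X_n(c) + eta (Y_(n-1) + Y_n + Y_(n+1))], with [eta] proportional to the
   window length. Since [w(n +- 1) <= K w(n)], weighting by [w] and summing (or
   taking the sup) shifts the neighbours back at the cost of a factor [K], so for
   [eta (1 + 2K) <= 1/2] the [eta]-term is absorbed and the weighted norm of [Y] is
   controlled by that of [X(c)]. The sums and sups are made finite beforehand by
   truncating [w] at a decaying weight. Finitely many windows of a fixed length
   cover [(t0 - T, t0 + T)]. *)

Fixpoint sumZ (f : Z -> R) (L : nat) : R :=
  match L with
  | O => f 0%Z
  | S L' => sumZ f L' + f (Z.of_nat L) + f (- Z.of_nat L)%Z
  end.

Lemma sumZ_ge0 f L : (forall n, 0 <= f n) -> 0 <= sumZ f L.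
Proof.
  intros Hf; induction L as [|L IH]; cbn [sumZ]; [apply Hf|].
  pose proof (Hf (Z.of_nat (S L))); pose proof (Hf (- Z.of_nat (S L))%Z); lra.
Qed.

Lemma sumZ_le f g L :
  (forall n, (Z.abs n <= Z.of_nat L)%Z -> f n <= g n) -> sumZ f L <= sumZ g L.
Proof.
  induction L as [|L IH]; intros Hfg; cbn [sumZ].
  - apply Hfg; lia.
  - assert (sumZ f L <= sumZ g L) by (apply IH; intros n Hn; apply Hfg; lia).
    pose proof (Hfg (Z.of_nat (S L)) ltac:(lia)).
    pose proof (Hfg (- Z.of_nat (S L))%Z ltac:(lia)); lra.
Qed.

Lemma sumZ_monotone f L L' : (forall n, 0 <= f n) -> (L <= L')%nat -> sumZ f L <= sumZ f L'.
Proof.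
  intros Hf HL; induction HL as [|L' _ IH]; [lra|]; cbn [sumZ].
  pose proof (Hf (Z.of_nat (S L'))); pose proof (Hf (- Z.of_nat (S L'))%Z); lra.
Qed.

Lemma sumZ_term f L n : (forall m, 0 <= f m) -> (Z.abs n <= Z.of_nat L)%Z -> f n <= sumZ f L.
Proof.
  intros Hf; induction L as [|L IH]; intros Hn; cbn [sumZ].
  - replace n with 0%Z by lia; lra.
  - pose proof (Hf (Z.of_nat (S L))); pose proof (Hf (- Z.of_nat (S L))%Z).
    destruct (Z_le_gt_dec (Z.abs n) (Z.of_nat L)) as [Hin|Hout].
    + specialize (IH Hin); lra.
    + pose proof (sumZ_ge0 f L Hf).
      destruct (Z_le_gt_dec 0 n).
      * replace n with (Z.of_nat (S L)) by lia; lra.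
      * replace n with (- Z.of_nat (S L))%Z by lia; lra.
Qed.

Lemma sumZ_plus f g L : sumZ (fun n => f n + g n) L = sumZ f L + sumZ g L.
Proof. induction L as [|L IH]; cbn [sumZ]; [lra|]; rewrite IH; lra. Qed.

Lemma sumZ_scal c f L : sumZ (fun n => c * f n) L = c * sumZ f L.
Proof. induction L as [|L IH]; cbn [sumZ]; [lra|]; rewrite IH; lra. Qed.

Lemma sumZ_shift_succ f L :
  sumZ (fun n => f (n + 1)%Z) L = sumZ f L - f (- Z.of_nat L)%Z + f (Z.of_nat (S L)).
Proof.
  induction L as [|L IH]; cbn [sumZ]; [simpl; lra|]; rewrite IH.
  replace (Z.of_nat (S L) + 1)%Z with (Z.of_nat (S (S L))) by lia.
  replace (- Z.of_nat (S L) + 1)%Z with (- Z.of_nat L)%Z by lia; lra.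
Qed.

Lemma sumZ_shift_pred f L :
  sumZ (fun n => f (n - 1)%Z) L = sumZ f L - f (Z.of_nat L) + f (- Z.of_nat (S L))%Z.
Proof.
  induction L as [|L IH]; cbn [sumZ]; [simpl; lra|]; rewrite IH.
  replace (- Z.of_nat (S L) - 1)%Z with (- Z.of_nat (S (S L)))%Z by lia.
  replace (Z.of_nat (S L) - 1)%Z with (Z.of_nat L) by lia; lra.
Qed.

Lemma sumZ_shift_succ_le f L :
  (forall n, 0 <= f n) -> sumZ (fun n => f (n + 1)%Z) L <= sumZ f (S L).
Proof.
  intros Hf; rewrite sumZ_shift_succ; cbn [sumZ].
  pose proof (Hf (- Z.of_nat L)%Z); pose proof (Hf (- Z.of_nat (S L))%Z); lra.
Qed.

Lemma sumZ_shift_pred_le f L :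
  (forall n, 0 <= f n) -> sumZ (fun n => f (n - 1)%Z) L <= sumZ f (S L).
Proof.
  intros Hf; rewrite sumZ_shift_pred; cbn [sumZ].
  pose proof (Hf (Z.of_nat L)); pose proof (Hf (Z.of_nat (S L))); lra.
Qed.

(* Shaped so that the finite-[p] case of [wnorm_finite] is convertible to [summableZ]. *)
Definition summableZ (f : Z -> R) : Prop :=
  ex_series (fun k : nat => f (Z.of_nat k)) /\
  ex_series (fun k : nat => f (- Z.of_nat (S k))%Z).

Lemma sumZ_sum_n f L :
  sumZ f (S L) = sum_n (fun k => f (Z.of_nat k)) (S L) + sum_n (fun k => f (- Z.of_nat (S k))%Z) L.
Proof.
  induction L as [|L IH].
  - rewrite sum_Sn, !sum_O; simpl; unfold plus; simpl; lra.
  - change (sumZ f (S (S L)))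
      with (sumZ f (S L) + f (Z.of_nat (S (S L))) + f (- Z.of_nat (S (S L)))%Z).
    rewrite IH, (sum_Sn (fun k => f (Z.of_nat k)) (S L)),
      (sum_Sn (fun k => f (- Z.of_nat (S k))%Z) L).
    change (@plus R_AbelianMonoid ?x ?y) with (x + y); lra.
Qed.

Lemma sum_n_incr (u : nat -> R) n : (forall k, 0 <= u k) -> sum_n u n <= sum_n u (S n).
Proof.
  intros Hu; rewrite sum_Sn; change (@plus R_AbelianMonoid ?x ?y) with (x + y).
  pose proof (Hu (S n)); lra.
Qed.

Lemma sum_n_ge0 (u : nat -> R) n : (forall k, 0 <= u k) -> 0 <= sum_n u n.
Proof.
  intros Hu; induction n as [|n IH]; [rewrite sum_O; apply Hu|].
  pose proof (sum_n_incr u n Hu); lra.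
Qed.

Lemma ex_series_sum_n_bounded (u : nat -> R) :
  (forall k, 0 <= u k) -> ex_series u -> exists B, forall n, sum_n u n <= B.
Proof.
  intros Hu [l Hl]; exists l; intros n.
  apply (is_lim_seq_incr_compare (sum_n u) l Hl); intros; apply sum_n_incr, Hu.
Qed.

Lemma summableZ_sumZ_bounded f :
  (forall n, 0 <= f n) -> summableZ f -> exists B, forall L, sumZ f L <= B.
Proof.
  intros Hf [Hpos Hneg].
  destruct (ex_series_sum_n_bounded _ (fun k => Hf _) Hpos) as [B1 HB1].
  destruct (ex_series_sum_n_bounded _ (fun k => Hf _) Hneg) as [B2 HB2].
  exists (B1 + B2); intros L.
  apply Rle_trans with (sumZ f (S L)); [apply sumZ_monotone; auto|].
  rewrite sumZ_sum_n; pose proof (HB1 (S L)); pose proof (HB2 L); lra.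
Qed.

Lemma sumZ_bounded_summableZ f B :
  (forall n, 0 <= f n) -> (forall L, sumZ f L <= B) -> summableZ f.
Proof.
  intros Hf HB.
  assert (Hcv : forall u : nat -> R, (forall k, 0 <= u k) -> (forall n, sum_n u n <= B) -> ex_series u).
  { intros u Hu HuB.
    destruct (ex_finite_lim_seq_incr (sum_n u) B (fun n => sum_n_incr u n Hu) HuB) as [l Hl].
    exists l; exact Hl. }
  split; apply Hcv; try (intros; apply Hf); intros n; specialize (HB (S n)); rewrite sumZ_sum_n in HB.
  - pose proof (sum_n_incr (fun k => f (Z.of_nat k)) n (fun k => Hf _)).
    pose proof (sum_n_ge0 (fun k => f (- Z.of_nat (S k))%Z) n (fun k => Hf _)); lra.
  - pose proof (sum_n_ge0 (fun k => f (Z.of_nat k)) (S n) (fun k => Hf _)); lra.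
Qed.

Lemma summableZ_le f g C :
  (forall n, 0 <= f n <= C * g n) -> summableZ g -> summableZ f.
Proof.
  intros Hfg [Hpos Hneg].
  assert (Hcmp : forall u v : nat -> R, (forall k, 0 <= u k <= C * v k) -> ex_series v -> ex_series u).
  { intros u v Huv Hv.
    apply (@ex_series_le R_AbsRing R_CompleteNormedModule u (fun k => scal C (v k))).
    - intros k; change (Rabs (u k) <= C * v k); rewrite Rabs_pos_eq; apply Huv.
    - exact (@ex_series_scal_l R_AbsRing R_NormedModule C v Hv). }
  split; [apply (Hcmp _ _ (fun k => Hfg _) Hpos) | apply (Hcmp _ _ (fun k => Hfg _) Hneg)].
Qed.

Definition ratio_bounded (K : R) (v : Z -> R) : Prop :=
  forall n, v (n + 1)%Z <= K * v n /\ v (n - 1)%Z <= K * v n.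

Lemma ratio_bounded_Rmin K u v :
  0 <= K -> ratio_bounded K u -> ratio_bounded K v -> ratio_bounded K (fun n => Rmin (u n) (v n)).
Proof.
  intros HK Hu Hv n; destruct (Hu n), (Hv n); unfold Rmin.
  split; repeat destruct Rle_dec; nra.
Qed.

Lemma ratio_bounded_const K N : 1 <= K -> 0 <= N -> ratio_bounded K (fun _ => N).
Proof. intros HK HN n; split; nra. Qed.

Lemma ratio_bounded_geom K N :
  2 <= K -> 0 <= N -> ratio_bounded K (fun n => N * (/ 2) ^ Z.abs_nat n).
Proof.
  intros HK HN.
  assert (Hshift : forall m m', (Z.abs_nat m' <= S (Z.abs_nat m))%nat ->
            N * (/ 2) ^ Z.abs_nat m <= K * (N * (/ 2) ^ Z.abs_nat m')).
  { intros m m' Hm.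
    assert (Hpow : (/ 2) ^ S (Z.abs_nat m) <= (/ 2) ^ Z.abs_nat m')
      by (rewrite !pow_inv; apply Rinv_le_contravar; [apply pow_lt; lra | apply Rle_pow; [lra | exact Hm]]).
    pose proof (pow_le (/ 2) (Z.abs_nat m') ltac:(lra)); simpl in Hpow.
    apply Rmult_le_compat_l with (r := 2 * N) in Hpow; [|lra].
    replace (2 * N * (/ 2 * (/ 2) ^ Z.abs_nat m)) with (N * (/ 2) ^ Z.abs_nat m) in Hpow by field.
    assert (0 <= N * (/ 2) ^ Z.abs_nat m') by (apply Rmult_le_pos; auto).
    nra. }
  intros n; split; apply Hshift; lia.
Qed.

Lemma ratio_bounded_of_quotients w :
  (forall n, 0 < w n) ->
  (exists K, forall n, Rabs (w (n + 1)%Z / w n) + Rabs (w n / w (n + 1)%Z) <= K) ->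
  exists K, 2 <= K /\ ratio_bounded K w.
Proof.
  intros Hw [K0 HK0]; exists (Rmax K0 2); split; [apply Rmax_r|].
  assert (Hq : forall x y, 0 < y -> Rabs (x / y) <= Rmax K0 2 -> x <= Rmax K0 2 * y).
  { intros x y Hy Hxy; replace x with (x / y * y) by (field; lra).
    pose proof (Rle_abs (x / y)); apply Rmult_le_compat_r; lra. }
  intros n; split; apply Hq; try apply Hw.
  - pose proof (Rabs_pos (w n / w (n + 1)%Z)); pose proof (HK0 n); pose proof (Rmax_l K0 2); lra.
  - pose proof (HK0 (n - 1)%Z); replace (n - 1 + 1)%Z with n in * by lia.
    pose proof (Rabs_pos (w n / w (n - 1)%Z)); pose proof (Rmax_l K0 2); lra.
Qed.

Definition neighbour_dominated (eta : R) (x y : Z -> R) : Prop :=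
  forall n, y n <= x n + eta * (y (n - 1)%Z + y n + y (n + 1)%Z).

Section Absorption.

Variables (w x y : Z -> R) (K eta M : R).
Hypothesis w_ge0 : forall n, 0 <= w n.
Hypothesis w_ratio : ratio_bounded K w.
Hypothesis K_ge2 : 2 <= K.
Hypothesis x_ge0 : forall n, 0 <= x n.
Hypothesis y_bounded : forall n, 0 <= y n <= M.
Hypothesis eta_ge0 : 0 <= eta.
Hypothesis eta_small : eta * (1 + 2 * K) <= / 2.
Hypothesis y_dominated : neighbour_dominated eta x y.

Lemma weighted_neighbour_le rho n :
  (forall m, 0 <= rho m <= w m) -> ratio_bounded K rho ->
  rho n * y n <= w n * x n +
    eta * (K * (rho (n - 1)%Z * y (n - 1)%Z) + rho n * y n + K * (rho (n + 1)%Z * y (n + 1)%Z)).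
Proof.
  intros Hrho Hratio.
  assert (Hup : rho n <= K * rho (n - 1)%Z).
  { destruct (Hratio (n - 1)%Z) as [H _]; replace (n - 1 + 1)%Z with n in H by lia; exact H. }
  assert (Hdown : rho n <= K * rho (n + 1)%Z).
  { destruct (Hratio (n + 1)%Z) as [_ H]; replace (n + 1 - 1)%Z with n in H by lia; exact H. }
  pose proof (y_dominated n); pose proof (Hrho n).
  pose proof (y_bounded n); pose proof (y_bounded (n - 1)%Z); pose proof (y_bounded (n + 1)%Z).
  pose proof (x_ge0 n).
  apply Rle_trans with (rho n * (x n + eta * (y (n - 1)%Z + y n + y (n + 1)%Z))); [nra|].
  assert (rho n * x n <= w n * x n) by nra.
  assert (rho n * y (n - 1)%Z <= K * (rho (n - 1)%Z * y (n - 1)%Z)) by nra.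
  assert (rho n * y (n + 1)%Z <= K * (rho (n + 1)%Z * y (n + 1)%Z)) by nra.
  nra.
Qed.

Lemma weighted_sup_absorb B : (forall n, w n * x n <= B) -> forall n, w n * y n <= 2 * B.
Proof.
  intros HB n0.
  (* Truncating the weight at [w n0] makes [rho * y] bounded, so it has a supremum. *)
  set (rho := fun n => Rmin (w n) (w n0)).
  assert (Hrho : forall n, 0 <= rho n <= w n)
    by (intros n; split; [apply Rmin_glb|apply Rmin_l]; auto).
  assert (Hratio : ratio_bounded K rho)
    by (apply ratio_bounded_Rmin; [lra | auto | apply ratio_bounded_const; auto; lra]).
  set (g := fun n => rho n * y n).
  assert (Hg : forall n, 0 <= g n <= w n0 * M).
  { intros n; unfold g; pose proof (Hrho n); pose proof (y_bounded n); pose proof (Rmin_r (w n) (w n0)).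
    fold (rho n) in *; split; nra. }
  destruct (completeness (fun v => exists n, v = g n)) as [l [Hub Hlub]].
  { exists (w n0 * M); intros v [n ->]; apply Hg. }
  { exists (g n0); eauto. }
  assert (Hgl : forall n, g n <= l) by (intros n; apply Hub; eauto).
  assert (Habsorb : l <= B + l / 2).
  { apply Hlub; intros v [n ->].
    pose proof (weighted_neighbour_le rho n Hrho Hratio); fold (g n) (g (n - 1)%Z) (g (n + 1)%Z) in *.
    pose proof (HB n); pose proof (Hgl n); pose proof (Hgl (n - 1)%Z); pose proof (Hgl (n + 1)%Z).
    pose proof (Hg n); pose proof (Hg (n - 1)%Z); pose proof (Hg (n + 1)%Z).
    assert (eta * (K * g (n - 1)%Z + g n + K * g (n + 1)%Z) <= eta * ((1 + 2 * K) * l))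
      by (apply Rmult_le_compat_l; nra).
    nra. }
  assert (g n0 = w n0 * y n0) by (unfold g, rho; rewrite Rmin_left; lra).
  pose proof (Hgl n0); lra.
Qed.

Lemma truncated_sum_absorb rho C B L :
  (forall n, 0 <= rho n <= w n) -> ratio_bounded K rho ->
  (forall n, rho n * y n <= C * (/ 2) ^ Z.abs_nat n) ->
  (forall L', sumZ (fun n => w n * x n) L' <= B) ->
  sumZ (fun n => rho n * y n) L <= 2 * B + 2 * C * (/ 2) ^ S L.
Proof.
  intros Hrho Hratio Hdecay HB.
  set (g := fun n => rho n * y n).
  assert (Hg : forall n, 0 <= g n)
    by (intros n; unfold g; pose proof (Hrho n); pose proof (y_bounded n); nra).
  assert (Hwin : sumZ g L <= sumZ (fun n => w n * x n) L +
            eta * (K * sumZ (fun n => g (n - 1)%Z) L + sumZ g L + K * sumZ (fun n => g (n + 1)%Z) L)).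
  { rewrite <- !sumZ_scal, <- !sumZ_plus, <- sumZ_scal, <- sumZ_plus.
    apply sumZ_le; intros n _; apply (weighted_neighbour_le rho n Hrho Hratio). }
  assert (Hnext : sumZ g (S L) <= sumZ g L + 2 * C * (/ 2) ^ S L).
  { cbn [sumZ]; pose proof (Hdecay (Z.of_nat (S L))); pose proof (Hdecay (- Z.of_nat (S L))%Z).
    rewrite Zabs2Nat.id in *; replace (Z.abs_nat (- Z.of_nat (S L))) with (S L) in * by lia.
    unfold g; lra. }
  pose proof (sumZ_shift_pred_le g L Hg); pose proof (sumZ_shift_succ_le g L Hg).
  pose proof (sumZ_ge0 g (S L) Hg); pose proof (HB L).
  assert (eta * (K * sumZ (fun n => g (n - 1)%Z) L + sumZ g L + K * sumZ (fun n => g (n + 1)%Z) L)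
          <= eta * ((1 + 2 * K) * sumZ g (S L))).
  { apply Rmult_le_compat_l; [lra|].
    pose proof (sumZ_monotone g L (S L) Hg (le_S _ _ (le_n _))); nra. }
  nra.
Qed.

Lemma weighted_sum_absorb B :
  (forall L, sumZ (fun n => w n * x n) L <= B) -> forall L, sumZ (fun n => w n * y n) L <= 2 * B + 2.
Proof.
  intros HB L0.
  (* Truncating [w] at [N 2^-|n|] leaves it unchanged on [|n| <= L0], and the
     decay makes the boundary terms in [truncated_sum_absorb] negligible. *)
  set (N := sumZ (fun n => w n * 2 ^ Z.abs_nat n) L0).
  assert (Hw2 : forall n, 0 <= w n * 2 ^ Z.abs_nat n)
    by (intros n; pose proof (w_ge0 n); pose proof (pow_le 2 (Z.abs_nat n)); nra).
  assert (HN : 0 <= N) by (apply sumZ_ge0; auto).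
  set (rho := fun n => Rmin (w n) (N * (/ 2) ^ Z.abs_nat n)).
  assert (Hh : forall n, 0 < (/ 2) ^ Z.abs_nat n) by (intros; apply pow_lt; lra).
  assert (Hrho : forall n, 0 <= rho n <= w n)
    by (intros n; split; [apply Rmin_glb; auto; pose proof (Hh n); nra | apply Rmin_l]).
  assert (Hratio : ratio_bounded K rho)
    by (apply ratio_bounded_Rmin; [lra | auto | apply ratio_bounded_geom; auto]).
  assert (Hrho_w : forall n, (Z.abs n <= Z.of_nat L0)%Z -> rho n = w n).
  { intros n Hn; apply Rmin_left.
    pose proof (sumZ_term _ L0 n Hw2 Hn) as Hterm; fold N in Hterm.
    assert (2 ^ Z.abs_nat n * (/ 2) ^ Z.abs_nat n = 1)
      by (rewrite <- Rpow_mult_distr; replace (2 * / 2) with 1 by lra; apply pow1).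
    pose proof (Hh n); pose proof (w_ge0 n); nra. }
  assert (HM : 0 <= M) by (destruct (y_bounded 0%Z); lra).
  assert (Hdecay : forall n, rho n * y n <= N * M * (/ 2) ^ Z.abs_nat n).
  { intros n; pose proof (Rmin_r (w n) (N * (/ 2) ^ Z.abs_nat n)); pose proof (Hrho n).
    pose proof (y_bounded n); fold (rho n) in *; nra. }
  destruct (pow_lt_1_zero (/ 2) ltac:(rewrite Rabs_pos_eq; lra) (/ (N * M + 1))
              ltac:(apply Rinv_0_lt_compat; nra)) as [L1 HL1].
  set (L := Nat.max L0 L1).
  assert (Htail : N * M * (/ 2) ^ S L <= 1).
  { specialize (HL1 (S L) ltac:(unfold L; lia)).
    rewrite Rabs_pos_eq in HL1 by (apply pow_le; lra).
    apply Rmult_lt_compat_l with (r := N * M + 1) in HL1; [|nra].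
    rewrite Rinv_r in HL1 by nra; pose proof (pow_le (/ 2) (S L) ltac:(lra)); nra. }
  apply Rle_trans with (sumZ (fun n => rho n * y n) L0).
  { apply sumZ_le; intros n Hn; rewrite Hrho_w by exact Hn; lra. }
  apply Rle_trans with (sumZ (fun n => rho n * y n) L).
  { apply sumZ_monotone; [|unfold L; lia].
    intros n; pose proof (Hrho n); pose proof (y_bounded n); nra. }
  pose proof (truncated_sum_absorb rho (N * M) B L Hrho Hratio Hdecay HB); lra.
Qed.

End Absorption.

Lemma rpow_ge0 x q : 0 <= rpow x q.
Proof. unfold rpow; destruct Rle_dec; [lra | apply Rlt_le, exp_pos]. Qed.

Lemma rpow_le x y q : 0 <= q -> 0 <= x <= y -> rpow x q <= rpow y q.
Proof.
  intros Hq Hxy; unfold rpow; destruct (Rle_dec x 0), (Rle_dec y 0).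
  - lra.
  - apply Rlt_le, exp_pos.
  - lra.
  - apply Rle_Rpower_l; lra.
Qed.

Lemma rpow_scal e x q : 0 < e -> 0 <= x -> rpow (e * x) q = Rpower e q * rpow x q.
Proof.
  intros He Hx; unfold rpow; destruct (Rle_dec x 0), (Rle_dec (e * x) 0).
  - ring.
  - nra.
  - nra.
  - rewrite Rpower_mult_distr; lra.
Qed.

Lemma rpow_plus_le x y q :
  0 <= q -> 0 <= x -> 0 <= y -> rpow (x + y) q <= Rpower 2 q * (rpow x q + rpow y q).
Proof.
  intros Hq Hx Hy.
  assert (Hmax : rpow (Rmax x y) q <= rpow x q + rpow y q).
  { pose proof (rpow_ge0 x q); pose proof (rpow_ge0 y q); unfold Rmax; destruct Rle_dec; lra. }
  apply Rle_trans with (rpow (2 * Rmax x y) q).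
  - apply rpow_le; auto; pose proof (Rmax_l x y); pose proof (Rmax_r x y); lra.
  - assert (0 <= Rmax x y) by (apply Rle_trans with x; [lra | apply Rmax_l]).
    rewrite rpow_scal by lra.
    apply Rmult_le_compat_l; [apply Rlt_le, exp_pos | exact Hmax].
Qed.

Lemma Rpower_le_self e q : 1 <= q -> 0 < e <= 1 -> Rpower e q <= e.
Proof.
  intros Hq He; replace q with (1 + (q - 1)) by ring.
  rewrite Rpower_plus, Rpower_1 by lra.
  assert (Rpower e (q - 1) <= Rpower 1 (q - 1)) by (apply Rle_Rpower_l; lra).
  unfold Rpower at 2 in H; rewrite ln_1, Rmult_0_r, exp_0 in H.
  pose proof (exp_pos ((q - 1) * ln e)); unfold Rpower in *; nra.
Qed.

(* Apply [(u + v)^q <= 2^q (u^q + v^q)] twice, then [eta^q <= eta]. *)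
Lemma neighbour_dominated_rpow q eta x y :
  1 <= q -> 0 < eta <= 1 -> (forall n, 0 <= x n) -> (forall n, 0 <= y n) ->
  neighbour_dominated eta x y ->
  neighbour_dominated (Rpower 2 q ^ 2 * eta) (fun n => Rpower 2 q ^ 2 * rpow (x n) q)
    (fun n => rpow (y n) q).
Proof.
  intros Hq Heta Hx Hy Hdom n.
  assert (Hsplit : y n <= (x n + eta * y (n - 1)%Z) + (eta * y n + eta * y (n + 1)%Z))
    by (pose proof (Hdom n); lra).
  pose proof (Hx n); pose proof (Hy n); pose proof (Hy (n - 1)%Z); pose proof (Hy (n + 1)%Z).
  assert (He : forall m, rpow (eta * y m) q <= eta * rpow (y m) q).
  { intros m; rewrite rpow_scal by (try lra; apply Hy).
    apply Rmult_le_compat_r; [apply rpow_ge0 | apply Rpower_le_self; lra]. }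
  pose proof (He n); pose proof (He (n - 1)%Z); pose proof (He (n + 1)%Z).
  pose proof (rpow_plus_le (x n) (eta * y (n - 1)%Z) q ltac:(lra) ltac:(lra) ltac:(nra)).
  pose proof (rpow_plus_le (eta * y n) (eta * y (n + 1)%Z) q ltac:(lra) ltac:(nra) ltac:(nra)).
  pose proof (rpow_plus_le (x n + eta * y (n - 1)%Z) (eta * y n + eta * y (n + 1)%Z) q
                ltac:(lra) ltac:(nra) ltac:(nra)).
  set (c := Rpower 2 q) in *.
  assert (Hc : 0 < c) by apply exp_pos.
  apply Rle_trans with (rpow ((x n + eta * y (n - 1)%Z) + (eta * y n + eta * y (n + 1)%Z)) q).
  { apply rpow_le; [lra | split; [lra | exact Hsplit]]. }
  simpl; nra.
Qed.

(* One-sequence form of [wnorm_finite], applied to [|f n| + |g n|]. *)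
Definition wfinite (w : Z -> R) (p : Rbar) (x : Z -> R) : Prop :=
  match p with
  | Finite q => summableZ (fun n => w n * rpow (x n) q)
  | p_infty => exists B, forall n, w n * x n <= B
  | m_infty => False
  end.

Lemma wnorm_finite_wfinite w p f g :
  (forall n, 0 <= w n) -> Rbar_le 0 p ->
  wnorm_finite w p f g -> wfinite w p (fun n => Cmod (f n) + Cmod (g n)).
Proof.
  intros Hw Hp; destruct p as [q| |]; simpl in Hp; unfold wfinite; [|auto|auto].
  apply summableZ_le with (C := Rpower 2 q); intros n.
  pose proof (Hw n); pose proof (rpow_ge0 (Cmod (f n) + Cmod (g n)) q).
  pose proof (rpow_plus_le (Cmod (f n)) (Cmod (g n)) q Hp (Cmod_ge_0 _) (Cmod_ge_0 _)).
  split; nra.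
Qed.

Lemma wfinite_wnorm_finite w p f g y :
  (forall n, 0 <= w n) -> Rbar_le 0 p ->
  (forall n, Cmod (f n) + Cmod (g n) <= y n) ->
  wfinite w p y -> wnorm_finite w p f g.
Proof.
  intros Hw Hp Hy; destruct p as [q| |]; simpl in Hp; unfold wfinite; [| |auto].
  - apply summableZ_le with (C := 2); intros n.
    pose proof (Hw n); pose proof (Cmod_ge_0 (f n)); pose proof (Cmod_ge_0 (g n)); pose proof (Hy n).
    pose proof (rpow_ge0 (Cmod (f n)) q); pose proof (rpow_ge0 (Cmod (g n)) q).
    assert (rpow (Cmod (f n)) q <= rpow (y n) q) by (apply rpow_le; lra).
    assert (rpow (Cmod (g n)) q <= rpow (y n) q) by (apply rpow_le; lra).
    split; nra.
  - intros [B HB]; exists B; intros n.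
    pose proof (Hw n); pose proof (Hy n); pose proof (HB n); nra.
Qed.

Lemma wfinite_neighbour_stable w p K :
  (forall n, 0 <= w n) -> ratio_bounded K w -> 2 <= K -> Rbar_le 1 p ->
  exists eta, 0 < eta /\ forall x y M,
    (forall n, 0 <= x n) -> (forall n, 0 <= y n <= M) -> neighbour_dominated eta x y ->
    wfinite w p x -> wfinite w p y.
Proof.
  intros Hw HwK HK Hp; destruct p as [q| |]; simpl in Hp; [| |contradiction].
  - set (c := Rpower 2 q).
    assert (Hc : 1 <= c)
      by (unfold c; rewrite <- (Rpower_O 2) by lra; apply Rle_Rpower; lra).
    exists (Rmin 1 (/ (2 * c ^ 2 * (1 + 2 * K)))).
    set (eta := Rmin 1 _).
    assert (Heta0 : 0 < eta)
      by (apply Rmin_glb_lt; [lra | apply Rinv_0_lt_compat; simpl; nra]).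
    assert (Heta : c ^ 2 * eta * (1 + 2 * K) <= / 2).
    { pose proof (Rmin_r 1 (/ (2 * c ^ 2 * (1 + 2 * K)))); fold eta in H.
      assert (Hpos : 0 < 2 * c ^ 2 * (1 + 2 * K)) by (simpl; nra).
      apply Rmult_le_compat_l with (r := 2 * c ^ 2 * (1 + 2 * K)) in H; [|lra].
      rewrite Rinv_r in H by lra; lra. }
    split; [exact Heta0|]; intros x y M Hx Hy Hdom Hfin; simpl in Hfin |- *.
    pose proof (neighbour_dominated_rpow q eta x y Hp (conj Heta0 (Rmin_l _ _)) Hx
                  (fun n => proj1 (Hy n)) Hdom) as Hdomq; fold c in Hdomq.
    assert (Hwx : forall n, 0 <= w n * rpow (x n) q)
      by (intros n; apply Rmult_le_pos; [apply Hw | apply rpow_ge0]).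
    destruct (summableZ_sumZ_bounded _ Hwx Hfin) as [B HB].
    apply (sumZ_bounded_summableZ _ (2 * (c ^ 2 * B) + 2)).
    + intros n; apply Rmult_le_pos; [apply Hw | apply rpow_ge0].
    + apply (weighted_sum_absorb w (fun n => c ^ 2 * rpow (x n) q) _ K (c ^ 2 * eta) (rpow M q));
        auto.
      * intros n; apply Rmult_le_pos; [simpl; nra | apply rpow_ge0].
      * intros n; split; [apply rpow_ge0 | apply rpow_le; [lra | apply Hy]].
      * simpl; nra.
      * intros L; apply Rle_trans with (c ^ 2 * sumZ (fun n => w n * rpow (x n) q) L).
        -- rewrite <- sumZ_scal; apply sumZ_le; intros n _; lra.
        -- apply Rmult_le_compat_l; [simpl; nra | apply HB].
  - exists (/ (2 * (1 + 2 * K))); split; [apply Rinv_0_lt_compat; lra|].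
    intros x y M Hx Hy Hdom [B HB]; exists (2 * B).
    apply (weighted_sup_absorb w x y K (/ (2 * (1 + 2 * K))) M); auto.
    + apply Rlt_le, Rinv_0_lt_compat; lra.
    + rewrite Rinv_mult; field_simplify; lra.
Qed.

Lemma in_tint_continuation (P : R -> Prop) t0 T tau :
  0 < tau -> P t0 ->
  (forall c s, in_tint t0 T c -> in_tint t0 T s -> Rabs (s - c) <= tau -> P c -> P s) ->
  forall t, in_tint t0 T t -> P t.
Proof.
  intros Htau H0 Hstep.
  assert (Hk : forall k t, in_tint t0 T t -> Rabs (t - t0) <= INR k * tau -> P t).
  { induction k as [|k IH]; intros t Ht Hdist.
    - simpl in Hdist; replace t with t0; [exact H0|].
      unfold Rabs in Hdist; destruct Rcase_abs in Hdist; lra.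
    - (* the step is taken from the point of [[t - tau, t + tau]] nearest to [t0] *)
      set (c := Rmax (t - tau) (Rmin (t + tau) t0)).
      rewrite S_INR, Rmult_plus_distr_r, Rmult_1_l in Hdist; unfold in_tint in *.
      assert (0 <= INR k * tau) by (apply Rmult_le_pos; [apply pos_INR | lra]).
      apply (Hstep c t); try apply IH; unfold c, Rmax, Rmin, in_tint in *;
        repeat destruct Rle_dec; unfold Rabs in *; repeat destruct Rcase_abs; lra. }
  intros t Ht; destruct (INR_archimed tau T Htau) as [k Hk'].
  apply (Hk k t Ht); unfold in_tint, Rabs in *; destruct Rcase_abs; lra.
Qed.

Lemma Rabs_increment_le (h dh : R -> R) c s D0 :
  (forall x, Rmin c s <= x <= Rmax c s -> is_derive h x (dh x) /\ Rabs (dh x) <= D0) ->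
  Rabs (h s - h c) <= D0 * Rabs (s - c).
Proof.
  intros Hh.
  destruct (MVT_gen h c s dh) as [x [Hx ->]].
  - intros x Hx; apply Hh; lra.
  - intros x Hx; apply continuity_pt_filterlim, (ex_derive_continuous h x).
    exists (dh x); apply Hh; auto.
  - rewrite Rabs_mult; apply Rmult_le_compat_r; [apply Rabs_pos | apply Hh; auto].
Qed.

Lemma is_derive_fst (f : R -> C) x l : is_derive f x l -> is_derive (fun t => fst (f t)) x (fst l).
Proof.
  intros Hf; unfold is_derive in *.
  exact (filterdiff_comp' f (fun z : C => fst z) x _ _ Hf (filterdiff_linear _ is_linear_fst)).
Qed.

Lemma is_derive_snd (f : R -> C) x l : is_derive f x l -> is_derive (fun t => snd (f t)) x (snd l).
Proof.
  intros Hf; unfold is_derive in *.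
  exact (filterdiff_comp' f (fun z : C => snd z) x _ _ Hf (filterdiff_linear _ is_linear_snd)).
Qed.

(* Real mean value theorem on each component; [Cmod z <= sqrt 2 * max (|Re z|, |Im z|)]
   costs the factor [2]. *)
Lemma Cmod_increment_le (f df : R -> C) c s D0 :
  (forall x, Rmin c s <= x <= Rmax c s -> is_derive f x (df x) /\ Cmod (df x) <= D0) ->
  Cmod (f s - f c) <= 2 * D0 * Rabs (s - c).
Proof.
  intros Hf.
  assert (Hparts : Rabs (fst (f s - f c)%C) <= D0 * Rabs (s - c) /\
                   Rabs (snd (f s - f c)%C) <= D0 * Rabs (s - c)).
  { split; [apply (Rabs_increment_le (fun t => fst (f t)) (fun t => fst (df t)))
           |apply (Rabs_increment_le (fun t => snd (f t)) (fun t => snd (df t)))];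
      intros x Hx; destruct (Hf x Hx) as [Hd Hb]; pose proof (Rmax_Cmod (df x));
      split; [apply is_derive_fst; exact Hd | pose proof (Rmax_l (Rabs (fst (df x))) (Rabs (snd (df x)))); lra
             |apply is_derive_snd; exact Hd | pose proof (Rmax_r (Rabs (fst (df x))) (Rabs (snd (df x)))); lra]. }
  assert (Hsqrt2 : sqrt 2 <= 2)
    by (rewrite <- (sqrt_square 2) at 2 by lra; apply sqrt_le_1; lra).
  assert (Hmax : Rmax (Rabs (fst (f s - f c)%C)) (Rabs (snd (f s - f c)%C)) <= D0 * Rabs (s - c))
    by (apply Rmax_lub; apply Hparts).
  pose proof (Cmod_2Rmax (f s - f c)%C); pose proof (sqrt_pos 2).
  pose proof (Rle_trans _ _ _ (Rmax_l _ _) Hmax); pose proof (Rabs_pos (fst (f s - f c)%C)); nra.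
Qed.

Lemma in_tint_between t0 T c s x :
  in_tint t0 T c -> in_tint t0 T s -> Rmin c s <= x <= Rmax c s ->
  in_tint t0 T x /\ Rabs (x - c) <= Rabs (s - c).
Proof.
  unfold in_tint, Rmin, Rmax; intros; destruct Rle_dec; split; try lra;
    unfold Rabs; repeat destruct Rcase_abs; lra.
Qed.

Lemma bounded_on_common t0 T (a b a' b' : Z -> R -> C) :
  bounded_on t0 T a -> bounded_on t0 T b -> bounded_on t0 T a' -> bounded_on t0 T b' ->
  exists M, 0 <= M /\ forall n t, in_tint t0 T t ->
    Cmod (a n t) <= M /\ Cmod (b n t) <= M /\ Cmod (a' n t) <= M /\ Cmod (b' n t) <= M.
Proof.
  intros [M1 H1] [M2 H2] [M3 H3] [M4 H4].
  exists (Rmax 0 (Rmax (Rmax M1 M2) (Rmax M3 M4))); split; [apply Rmax_l|].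
  intros n t Ht; specialize (H1 n t Ht); specialize (H2 n t Ht);
    specialize (H3 n t Ht); specialize (H4 n t Ht).
  unfold Rmax; repeat destruct Rle_dec; lra.
Qed.

Definition AL_field (x y xm xp : C) : C := ((1 - x * y) * (xm + xp) - 2 * x)%C.

Lemma AL_field_lipschitz M x y xm xp x' y' xm' xp' :
  0 <= M -> Cmod x <= M -> Cmod y <= M -> Cmod x' <= M -> Cmod y' <= M ->
  Cmod xm' <= M -> Cmod xp' <= M ->
  Cmod (AL_field x y xm xp - AL_field x' y' xm' xp')%C
    <= (3 + 3 * M * M) * (Cmod (xm - xm')%C + Cmod (x - x')%C + Cmod (y - y')%C + Cmod (xp - xp')%C).
Proof.
  intros HM Hx Hy Hx' Hy' Hm' Hp'.
  replace (AL_field x y xm xp - AL_field x' y' xm' xp')%C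
    with ((1 - x * y) * (xm - xm') + (1 - x * y) * (xp - xp')
          - ((x - x') * y + x' * (y - y')) * (xm' + xp') - 2 * (x - x'))%C
    by (unfold AL_field; ring).
  assert (H1 : Cmod (1 - x * y)%C <= 1 + M * M).
  { eapply Rle_trans; [unfold Cminus; apply Cmod_triangle|].
    rewrite Cmod_opp, Cmod_1, Cmod_mult.
    pose proof (Cmod_ge_0 x); pose proof (Cmod_ge_0 y); nra. }
  assert (H2 : Cmod ((x - x') * y + x' * (y - y'))%C <= M * Cmod (x - x')%C + M * Cmod (y - y')%C).
  { eapply Rle_trans; [apply Cmod_triangle|]; rewrite !Cmod_mult.
    pose proof (Cmod_ge_0 (x - x')%C); pose proof (Cmod_ge_0 (y - y')%C);
    pose proof (Cmod_ge_0 x'); pose proof (Cmod_ge_0 y); nra. }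
  assert (H3 : Cmod (xm' + xp')%C <= 2 * M) by (eapply Rle_trans; [apply Cmod_triangle | lra]).
  assert (Htri : forall u v z r : C, Cmod (u + v - z - r)%C <= Cmod u + Cmod v + Cmod z + Cmod r).
  { intros u v z r; unfold Cminus.
    eapply Rle_trans; [apply Cmod_triangle|]; rewrite Cmod_opp; apply Rplus_le_compat_r.
    eapply Rle_trans; [apply Cmod_triangle|]; rewrite Cmod_opp; apply Rplus_le_compat_r.
    apply Cmod_triangle. }
  eapply Rle_trans; [apply Htri|].
  rewrite !Cmod_mult, Cmod_R, Rabs_pos_eq by lra.
  pose proof (Cmod_ge_0 (xm - xm')%C); pose proof (Cmod_ge_0 (xp - xp')%C);
  pose proof (Cmod_ge_0 (x - x')%C); pose proof (Cmod_ge_0 (y - y')%C).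
  pose proof (Cmod_ge_0 ((x - x') * y + x' * (y - y'))%C); pose proof (Cmod_ge_0 (1 - x * y)%C).
  assert (Cmod ((x - x') * y + x' * (y - y'))%C * Cmod (xm' + xp')%C
          <= (M * Cmod (x - x')%C + M * Cmod (y - y')%C) * (2 * M))
    by (apply Rmult_le_compat; auto; apply Cmod_ge_0).
  nra.
Qed.

Lemma AL_eq_a (da x y xm xp : C) :
  (- Ci * da - (1 - x * y) * (xm + xp) + 2 * x = 0)%C -> (- Ci * da = AL_field x y xm xp)%C.
Proof.
  intros E; unfold AL_field.
  transitivity ((- Ci * da - (1 - x * y) * (xm + xp) + 2 * x) + ((1 - x * y) * (xm + xp) - 2 * x))%C;
    [ring | rewrite E; ring].
Qed.

Lemma AL_eq_b (db x y ym yp : C) :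
  (- Ci * db + (1 - x * y) * (ym + yp) - 2 * y = 0)%C -> (- Ci * db = - AL_field y x ym yp)%C.
Proof.
  intros E; unfold AL_field.
  transitivity ((- Ci * db + (1 - x * y) * (ym + yp) - 2 * y) - ((1 - y * x) * (ym + yp) - 2 * y))%C;
    [ring | rewrite E; ring].
Qed.

Definition AL_dist (a b a' b' : Z -> R -> C) (t : R) (n : Z) : R :=
  Cmod (a n t - a' n t)%C + Cmod (b n t - b' n t)%C.

Lemma AL_dist_ge0 a b a' b' t n : 0 <= AL_dist a b a' b' t n.
Proof.
  unfold AL_dist; pose proof (Cmod_ge_0 (a n t - a' n t)%C); pose proof (Cmod_ge_0 (b n t - b' n t)%C); lra.
Qed.

Lemma sup_family (X : Z -> R -> R) (S : R -> Prop) c M :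
  S c -> (forall n s, S s -> X n s <= M) ->
  exists y : Z -> R, forall n, is_lub (fun v => exists s, S s /\ v = X n s) (y n).
Proof.
  intros Hc HM.
  assert (Hbound : forall n, bound (fun v => exists s, S s /\ v = X n s))
    by (intros n; exists M; intros v [s [Hs ->]]; auto).
  assert (Hne : forall n, exists v, exists s, S s /\ v = X n s) by (intros n; eauto).
  exists (fun n => proj1_sig (completeness _ (Hbound n) (Hne n))).
  intros n; exact (proj2_sig (completeness _ (Hbound n) (Hne n))).
Qed.

Section AL_difference.

Variables (t0 T M : R) (a b a' b' : Z -> R -> C).
Hypothesis M_ge0 : 0 <= M.
Hypothesis AL_bounded : forall n t, in_tint t0 T t ->
  Cmod (a n t) <= M /\ Cmod (b n t) <= M /\ Cmod (a' n t) <= M /\ Cmod (b' n t) <= M.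
Hypothesis sol : AL_solution t0 T a b.
Hypothesis sol' : AL_solution t0 T a' b'.

Let D := 3 + 3 * M * M.
Let dist := AL_dist a b a' b'.

Lemma AL_dist_le t n : in_tint t0 T t -> dist t n <= 4 * M.
Proof.
  intros Ht; destruct (AL_bounded n t Ht) as (Ha & Hb & Ha' & Hb').
  assert (Hsub : forall u v : C, Cmod u <= M -> Cmod v <= M -> Cmod (u - v)%C <= 2 * M)
    by (intros u v Hu Hv; unfold Cminus; eapply Rle_trans; [apply Cmod_triangle | rewrite Cmod_opp; lra]).
  unfold dist, AL_dist; pose proof (Hsub _ _ Ha Ha'); pose proof (Hsub _ _ Hb Hb'); lra.
Qed.

(* By the equations, the difference of the time derivatives at site [n] is
   controlled by the differences at [n - 1], [n], [n + 1]. *)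
Lemma AL_dist_increment n c s S0 :
  in_tint t0 T c -> in_tint t0 T s ->
  (forall x, Rmin c s <= x <= Rmax c s -> dist x (n - 1)%Z + dist x n + dist x (n + 1)%Z <= S0) ->
  dist s n <= dist c n + 4 * D * S0 * Rabs (s - c).
Proof.
  intros Hc Hs HS0.
  destruct sol as [da [db Hsol]]; destruct sol' as [da' [db' Hsol']].
  assert (Hderiv : forall x, Rmin c s <= x <= Rmax c s ->
            is_derive (fun t => a n t - a' n t)%C x (da n x - da' n x)%C /\
            Cmod (da n x - da' n x)%C <= D * S0 /\
            is_derive (fun t => b n t - b' n t)%C x (db n x - db' n x)%C /\
            Cmod (db n x - db' n x)%C <= D * S0).
  { intros x Hx; destruct (in_tint_between t0 T c s x Hc Hs Hx) as [Hxin _].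
    destruct (Hsol n x Hxin) as (Hda & Hdb & _ & _ & Ea & Eb).
    destruct (Hsol' n x Hxin) as (Hda' & Hdb' & _ & _ & Ea' & Eb').
    destruct (AL_bounded n x Hxin) as (Hn1 & Hn2 & Hn3 & Hn4).
    destruct (AL_bounded (n - 1)%Z x Hxin) as (Hm1 & Hm2 & Hm3 & Hm4).
    destruct (AL_bounded (n + 1)%Z x Hxin) as (Hp1 & Hp2 & Hp3 & Hp4).
    specialize (HS0 x Hx); unfold dist, AL_dist in HS0.
    assert (HD : 0 <= D) by (unfold D; nra).
    assert (HmCi : forall z z' : C, Cmod (z - z')%C = Cmod (- Ci * z - - Ci * z')%C)
      by (intros z z'; replace (- Ci * z - - Ci * z')%C with (- Ci * (z - z'))%C by ring;
          rewrite Cmod_mult, Cmod_opp, Cmod_Ci; ring).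
    split; [exact (is_derive_minus _ _ _ _ _ Hda Hda')|].
    split; [|split; [exact (is_derive_minus _ _ _ _ _ Hdb Hdb')|]].
    - rewrite HmCi, (AL_eq_a _ _ _ _ _ Ea), (AL_eq_a _ _ _ _ _ Ea').
      eapply Rle_trans; [apply (AL_field_lipschitz M); auto|].
      apply Rmult_le_compat_l; [exact HD|]; pose proof (Cmod_ge_0 (b (n - 1)%Z x - b' (n - 1)%Z x)%C);
        pose proof (Cmod_ge_0 (b (n + 1)%Z x - b' (n + 1)%Z x)%C); lra.
    - rewrite HmCi, (AL_eq_b _ _ _ _ _ Eb), (AL_eq_b _ _ _ _ _ Eb').
      replace (- AL_field (b n x) (a n x) (b (n - 1)%Z x) (b (n + 1)%Z x)
               - - AL_field (b' n x) (a' n x) (b' (n - 1)%Z x) (b' (n + 1)%Z x))%C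
        with (- (AL_field (b n x) (a n x) (b (n - 1)%Z x) (b (n + 1)%Z x)
               - AL_field (b' n x) (a' n x) (b' (n - 1)%Z x) (b' (n + 1)%Z x)))%C by ring.
      rewrite Cmod_opp; eapply Rle_trans; [apply (AL_field_lipschitz M); auto|].
      apply Rmult_le_compat_l; [exact HD|]; pose proof (Cmod_ge_0 (a (n - 1)%Z x - a' (n - 1)%Z x)%C);
        pose proof (Cmod_ge_0 (a (n + 1)%Z x - a' (n + 1)%Z x)%C); lra. }
  assert (Ha := Cmod_increment_le (fun t => a n t - a' n t)%C (fun t => da n t - da' n t)%C c s (D * S0)
                  ltac:(intros x Hx; split; apply Hderiv; exact Hx)).
  assert (Hb := Cmod_increment_le (fun t => b n t - b' n t)%C (fun t => db n t - db' n t)%C c s (D * S0)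
                  ltac:(intros x Hx; split; apply Hderiv; exact Hx)).
  assert (Htri : forall u v : C, Cmod u <= Cmod v + Cmod (u - v)%C)
    by (intros u v; replace u with (v + (u - v))%C at 1 by ring; apply Cmod_triangle).
  unfold dist, AL_dist; simpl in Ha, Hb.
  pose proof (Htri (a n s - a' n s)%C (a n c - a' n c)%C);
  pose proof (Htri (b n s - b' n s)%C (b n c - b' n c)%C); lra.
Qed.

(* [y n] is the supremum of [dist s n] over the window [|s - c| <= tau]. *)
Lemma AL_local_neighbour_bound eta :
  0 < eta -> exists tau, 0 < tau /\ forall c, in_tint t0 T c ->
    exists y : Z -> R, (forall n, 0 <= y n <= 4 * M) /\
      (forall n s, in_tint t0 T s -> Rabs (s - c) <= tau -> dist s n <= y n) /\
      neighbour_dominated eta (dist c) y.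
Proof.
  intros Heta.
  assert (HD : 0 < D) by (unfold D; nra).
  exists (eta / (4 * D)); split; [apply Rdiv_lt_0_compat; lra|].
  intros c Hc; set (tau := eta / (4 * D)).
  set (window := fun s => in_tint t0 T s /\ Rabs (s - c) <= tau).
  assert (Hcc : window c)
    by (split; [exact Hc | rewrite Rminus_diag, Rabs_R0; unfold tau; apply Rlt_le, Rdiv_lt_0_compat; lra]).
  destruct (sup_family (fun n s => dist s n) window c (4 * M) Hcc
              (fun n s Hs => AL_dist_le s n (proj1 Hs))) as [y Hy].
  assert (Hup : forall n s, window s -> dist s n <= y n) by (intros n s Hs; apply (proj1 (Hy n)); eauto).
  exists y; split; [|split].
  - intros n; split.
    + apply Rle_trans with (dist c n); [apply AL_dist_ge0 | auto].
    + apply (proj2 (Hy n)); intros v [s [Hs ->]]; apply AL_dist_le, Hs.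
  - intros n s Hs Hsc; apply Hup; split; auto.
  - intros n; apply (proj2 (Hy n)); intros v [s [[Hs Hsc] ->]].
    set (S0 := y (n - 1)%Z + y n + y (n + 1)%Z).
    assert (HS0 : 0 <= S0).
    { unfold S0; pose proof (Hup (n - 1)%Z c Hcc); pose proof (Hup n c Hcc); pose proof (Hup (n + 1)%Z c Hcc).
      pose proof (AL_dist_ge0 a b a' b' c (n - 1)%Z); pose proof (AL_dist_ge0 a b a' b' c n);
      pose proof (AL_dist_ge0 a b a' b' c (n + 1)%Z); unfold dist in *; lra. }
    pose proof (AL_dist_increment n c s S0 Hc Hs) as Hinc.
    assert (dist s n <= dist c n + 4 * D * S0 * Rabs (s - c)).
    { apply Hinc; intros x Hx; destruct (in_tint_between t0 T c s x Hc Hs Hx) as [Hxin Hxc].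
      assert (Hw : window x) by (split; [exact Hxin | lra]).
      pose proof (Hup (n - 1)%Z x Hw); pose proof (Hup n x Hw); pose proof (Hup (n + 1)%Z x Hw).
      unfold S0; lra. }
    assert (4 * D * S0 * Rabs (s - c) <= eta * S0).
    { replace (eta * S0) with (4 * D * S0 * tau) by (unfold tau; field; lra).
      apply Rmult_le_compat_l; [nra | exact Hsc]. }
    unfold S0 in *; lra.
Qed.

End AL_difference.

Theorem lemma2p3
  (w : Z -> R) (p : Rbar) (t0 T : R)
  (a b a' b' : Z -> R -> C)
  (hw1 : forall n : Z, 1 <= w n)
  (hwsup : exists K : R, forall n : Z,
      Rabs (w (n + 1)%Z / w n) + Rabs (w n / w (n + 1)%Z) <= K)
  (hp : Rbar_le (Finite 1) p)
  (hT : 0 < T)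
  (hba : bounded_on t0 T a) (hbb : bounded_on t0 T b)
  (hba' : bounded_on t0 T a') (hbb' : bounded_on t0 T b')
  (hsol : AL_solution t0 T a b) (hsol' : AL_solution t0 T a' b')
  (h0 : wnorm_finite w p (fun n => (a n t0 - a' n t0)%C) (fun n => (b n t0 - b' n t0)%C)) :
  forall t : R, in_tint t0 T t ->
    wnorm_finite w p (fun n => (a n t - a' n t)%C) (fun n => (b n t - b' n t)%C).
Proof.
  assert (hw0 : forall n, 0 <= w n) by (intros n; pose proof (hw1 n); lra).
  assert (hp0 : Rbar_le 0 p) by (destruct p; simpl in *; lra).
  destruct (ratio_bounded_of_quotients w (fun n => Rlt_le_trans _ _ _ Rlt_0_1 (hw1 n)) hwsup)
    as [K [HK HwK]].
  destruct (wfinite_neighbour_stable w p K hw0 HwK HK hp) as [eta [Heta Hstable]].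
  destruct (bounded_on_common t0 T a b a' b' hba hbb hba' hbb') as [M [HM Hbd]].
  destruct (AL_local_neighbour_bound t0 T M a b a' b' HM Hbd hsol hsol' eta Heta)
    as [tau [Htau Hlocal]].
  apply (in_tint_continuation _ t0 T tau Htau h0).
  intros c s Hc Hs Hcs Hfin.
  destruct (Hlocal c Hc) as (y & Hy & Hdist & Hdom).
  apply (wfinite_wnorm_finite w p _ _ y hw0 hp0 (fun n => Hdist n s Hs Hcs)).
  apply (Hstable (AL_dist a b a' b' c) y (4 * M)); auto.
  - intros n; apply AL_dist_ge0.
  - exact (wnorm_finite_wfinite w p _ _ hw0 hp0 Hfin).
Qed.
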